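(* For a positive integer $N$ and integers $m,\ell$ with $m\equiv \ell\pmod 2$, define \[ S_{m,\ell}^{N}(q):=\frac{q^{-\frac{1}{8}+\frac{(\ell+1)^2}{4(N+2)}-\frac{m^2}{4N}}}{J_{1}^3}\, f_{1,1+N,1}\big(q^{1+\frac{1}{2}(m+\ell)},q^{1-\frac{1}{2}(m-\ell)},q\big). \] Then $S_{m,\ell}^{N}(q)=S_{-m,\ell}^{N}(q)$, $S_{m,\ell}^{N}(q)=S_{2N-m,\ell}^{N}(q)$, and $S_{m,\ell}^{N}(q)=S_{N-m,N-\ell}^{N}(q)$.
   Context: Let $q=e^{2\pi i\tau}$ with $\operatorname{Im}\tau>0$, and for real $\alpha$ put $q^{\alpha}:=e^{2\pi i\alpha\tau}$. $J_1:=\prod_{i\ge1}(1-q^i)$. For positive integers $a,b,c$ and $x,y\in\mathbb{C}^*$, the Hecke-type double-sum is $f_{a,b,c}(x,y,q):=\Big(\sum_{r,s\ge0}-\sum_{r,s<0}\Big)(-1)^{r+s}x^ry^sq^{a\binom{r}{2}+brs+c\binom{s}{2}}$. *)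

From Stdlib Require Import Reals ZArith.
From Coquelicot Require Import Coquelicot.
Open Scope R_scope.

Definition cexp (z : C) : C :=
  (exp (fst z) * cos (snd z), exp (fst z) * sin (snd z)).

(* q^alpha := e^{2 pi i alpha tau}, for real alpha *)
Definition qpow (tau : C) (alpha : R) : C :=
  cexp (Cmult (0, 2 * PI * alpha) tau).

Fixpoint Cpow (z : C) (n : nat) : C :=
  match n with O => RtoC 1 | S n => Cmult z (Cpow z n) end.

Definition Czpow (z : C) (k : Z) : C :=
  match k with
  | Z0 => RtoC 1
  | Zpos p => Cpow z (Pos.to_nat p)
  | Zneg p => Cinv (Cpow z (Pos.to_nat p))
  end.

Fixpoint Csum (n : nat) (u : nat -> C) : C :=
  match n with O => RtoC 0 | S n => Cplus (Csum n u) (u n) end.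
Fixpoint Cprod (n : nat) (u : nat -> C) : C :=
  match n with O => RtoC 1 | S n => Cmult (Cprod n u) (u n) end.

Definition Clim (u : nat -> C) : C :=
  (real (Lim_seq (fun n => fst (u n))), real (Lim_seq (fun n => snd (u n)))).

Definition J1 (tau : C) : C :=
  Clim (fun n => Cprod n (fun i =>
          Cminus (RtoC 1) (Czpow (qpow tau 1) (Z.of_nat i + 1)))).

Definition hecke_term (a b c : Z) (x y q : C) (r s : Z) : C :=
  Cmult (Czpow (RtoC (-1)) (r + s))
   (Cmult (Czpow x r)
    (Cmult (Czpow y s)
     (Czpow q (a * (r * (r - 1) / 2) + b * r * s + c * (s * (s - 1) / 2))%Z))).

(* f_{a,b,c}(x,y,q) = (sum_{r,s>=0} - sum_{r,s<0}) term; the (absolutely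
   convergent) double sums are evaluated as limits of square partial sums. *)
Definition hecke_f (a b c : Z) (x y q : C) : C :=
  Clim (fun M =>
    Cminus
      (Csum M (fun r => Csum M (fun s =>
          hecke_term a b c x y q (Z.of_nat r) (Z.of_nat s))))
      (Csum M (fun r => Csum M (fun s =>
          hecke_term a b c x y q (- Z.of_nat r - 1) (- Z.of_nat s - 1))))).

Definition S_fun (N : nat) (m l : Z) (tau : C) : C :=
  Cmult
    (Cdiv (qpow tau (- / 8 + (IZR l + 1) ^ 2 / (4 * (INR N + 2))
                      - (IZR m) ^ 2 / (4 * INR N)))
          (Cpow (J1 tau) 3))
    (hecke_f 1 (1 + Z.of_nat N) 1
       (qpow tau (1 + (IZR m + IZR l) / 2))
       (qpow tau (1 - (IZR m - IZR l) / 2))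
       (qpow tau 1)).

(* Write f(a, b) for f_{1,N+1,1}(q^a, q^b, q).  Its (r, s) term is
   (-1)^{r+s} q^{Q_{a,b}(r,s)}, Q_{a,b}(r,s) = a r + b s + r(r-1)/2 + (N+1) r s + s(s-1)/2,
   and f(a, b) is the limit of the square sums over [-M, M)^2 of these terms weighted by the
   sign pattern (+1 on r, s >= 0, -1 on r, s < 0, 0 elsewhere).  The three symmetries of S
   come from three functional equations of f:
   - f(a, b) = f(b, a), by exchanging r and s (an identity of square sums);
   - f(a, b) = q^{a-b-N} f(N+b, a-N) when a - N, b are integers, via (r, s) |-> (s+1, r-1);
   - f(a, b) = q^{1-b} f(N+2-a, 2-b) when b is an integer, via (r, s) |-> (-r, -s-1).
   In the last two the change of variables maps the sign pattern to itself up to the lines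
   r = 0 and s = -1, and translates the square.  For Im tau > 0 all terms decay like
   e^{-2 pi Im tau (|r| + |s|)}, so square sums converge, are asymptotically translation
   invariant, and vanish for sequences odd under a reflection; the line terms are such
   sequences because b (resp. a - N) is integral.  The file develops powers of q, finite and
   square sums, convergence in C, decaying double sequences, then the three functional
   equations, from which the theorem follows by comparing the prefactors q^{e(m,l)}. *)

From Stdlib Require Import Reals ZArith Lia Lra.
From Coquelicot Require Import Coquelicot.
Open Scope R_scope.

Lemma cexp_add (z w : C) : cexp (Cplus z w) = Cmult (cexp z) (cexp w).
Proof.
  destruct z as [a b], w as [c d]. unfold cexp, Cplus, Cmult; simpl.
  rewrite exp_plus, cos_plus, sin_plus. f_equal; ring.
Qed.

Lemma qpow_add tau a b : qpow tau (a + b) = Cmult (qpow tau a) (qpow tau b).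
Proof.
  unfold qpow. rewrite <- cexp_add. f_equal.
  destruct tau as [x y]. unfold Cmult, Cplus; simpl. f_equal; ring.
Qed.

Lemma qpow_0 tau : qpow tau 0 = RtoC 1.
Proof.
  unfold qpow, cexp. destruct tau as [x y]; simpl.
  replace (0 * x - 2 * PI * 0 * y) with 0 by ring.
  replace (0 * y + 2 * PI * 0 * x) with 0 by ring.
  rewrite exp_0, cos_0, sin_0. unfold RtoC. f_equal; ring.
Qed.

Definition rate (tau : C) : R := 2 * PI * snd tau.

Lemma Cmod_qpow tau a : Cmod (qpow tau a) = exp (- rate tau * a).
Proof.
  unfold qpow, cexp, Cmod, rate. destruct tau as [x y]; simpl.
  replace (0 * x - 2 * PI * a * y) with (- (2 * PI * y) * a) by ring.
  set (e := exp _). set (t := 0 * y + 2 * PI * a * x).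
  replace (e * cos t * (e * cos t * 1) + e * sin t * (e * sin t * 1))
    with (Rsqr e * (Rsqr (sin t) + Rsqr (cos t))) by (unfold Rsqr; ring).
  rewrite sin2_cos2, Rmult_1_r. apply sqrt_Rsqr. left; apply exp_pos.
Qed.

Lemma qpow_inv tau a : Cinv (qpow tau a) = qpow tau (- a).
Proof.
  assert (Hn : qpow tau a <> RtoC 0).
  { intro H. pose proof (exp_pos (- rate tau * a)).
    rewrite <- Cmod_qpow, H, Cmod_0 in H0. lra. }
  assert (H : Cmult (qpow tau a) (qpow tau (- a)) = RtoC 1).
  { rewrite <- qpow_add, Rplus_opp_r. apply qpow_0. }
  rewrite <- (Cmult_1_r (Cinv _)), <- H. field. exact Hn.
Qed.

Lemma Cpow_qpow tau a n : Cpow (qpow tau a) n = qpow tau (a * INR n).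
Proof.
  induction n as [|n IH]; simpl Cpow.
  - rewrite Rmult_0_r, qpow_0. reflexivity.
  - rewrite IH, <- qpow_add, S_INR. f_equal. ring.
Qed.

Lemma Czpow_qpow tau a k : Czpow (qpow tau a) k = qpow tau (a * IZR k).
Proof.
  destruct k as [|p|p]; simpl.
  - rewrite Rmult_0_r, qpow_0; reflexivity.
  - rewrite Cpow_qpow, INR_IZR_INZ, positive_nat_Z. reflexivity.
  - rewrite Cpow_qpow, qpow_inv, INR_IZR_INZ, positive_nat_Z, <- Pos2Z.opp_pos, opp_IZR.
    f_equal. ring.
Qed.

Definition sg (k : Z) : C := if Z.even k then RtoC 1 else RtoC (-1).

Lemma Zeven_of_nat n : Z.even (Z.of_nat n) = Nat.even n.
Proof.
  induction n as [|n IH]; [reflexivity|].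
  rewrite Nat2Z.inj_succ, Z.even_succ, <- Z.negb_even, IH, Nat.even_succ, <- Nat.negb_even.
  reflexivity.
Qed.

Lemma Cpow_m1 n : Cpow (RtoC (-1)) n = if Nat.even n then RtoC 1 else RtoC (-1).
Proof.
  induction n as [|n IH]; [reflexivity|].
  simpl Cpow. rewrite IH, Nat.even_succ, <- Nat.negb_even.
  destruct (Nat.even n); simpl; unfold RtoC, Cmult; simpl; f_equal; ring.
Qed.

Lemma Czpow_m1 k : Czpow (RtoC (-1)) k = sg k.
Proof.
  unfold sg. destruct k as [|p|p]; simpl Czpow; [reflexivity| |];
    rewrite Cpow_m1, <- (Zeven_of_nat (Pos.to_nat p)), positive_nat_Z; [reflexivity|].
  change (Z.even (Z.neg p)) with (Z.even (Z.pos p)).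
  destruct (Z.even (Z.pos p)); unfold Cinv, RtoC; simpl; f_equal; field.
Qed.

Lemma Cmod_sg k : Cmod (sg k) = 1.
Proof. unfold sg. destruct (Z.even k); rewrite Cmod_R; [apply Rabs_R1|apply Rabs_m1]. Qed.

Lemma sg_odd_sum x y : Z.even (x + y) = false -> sg x = Copp (sg y).
Proof.
  unfold sg. rewrite Z.even_add.
  destruct (Z.even x), (Z.even y); simpl; intros H; try discriminate;
    unfold Copp, RtoC; simpl; f_equal; ring.
Qed.

Lemma Csum_ext n u v : (forall k, (k < n)%nat -> u k = v k) -> Csum n u = Csum n v.
Proof.
  induction n as [|n IH]; intros H; simpl; [reflexivity|].
  rewrite IH by (intros; apply H; lia). rewrite H by lia. reflexivity.
Qed.

Lemma Csum_plus n u v : Csum n (fun k => Cplus (u k) (v k)) = Cplus (Csum n u) (Csum n v).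
Proof. induction n as [|n IH]; simpl; [ring|]. rewrite IH. ring. Qed.

Lemma Csum_minus n u v : Csum n (fun k => Cminus (u k) (v k)) = Cminus (Csum n u) (Csum n v).
Proof. induction n as [|n IH]; simpl; [ring|]. rewrite IH. ring. Qed.

Lemma Csum_scal n c u : Csum n (fun k => Cmult c (u k)) = Cmult c (Csum n u).
Proof. induction n as [|n IH]; simpl; [ring|]. rewrite IH. ring. Qed.

Lemma Csum_swap n m (f : nat -> nat -> C) :
  Csum n (fun i => Csum m (fun j => f i j)) = Csum m (fun j => Csum n (fun i => f i j)).
Proof.
  induction n as [|n IH]; simpl.
  - induction m as [|m IHm]; simpl; [reflexivity|]. rewrite <- IHm. ring.
  - rewrite IH, <- Csum_plus. reflexivity.
Qed.

Lemma Csum_app n m u : Csum (n + m) u = Cplus (Csum n u) (Csum m (fun k => u (n + k)%nat)).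
Proof.
  induction m as [|m IH].
  - rewrite Nat.add_0_r. simpl. ring.
  - replace (n + S m)%nat with (S (n + m)) by lia. simpl. rewrite IH. ring.
Qed.

Lemma Csum_rev n u : Csum n (fun k => u (n - 1 - k)%nat) = Csum n u.
Proof.
  induction n as [|n IH]; [reflexivity|].
  rewrite <- Nat.add_1_l at 1. rewrite Csum_app. simpl Csum. rewrite <- IH.
  rewrite (Csum_ext n _ (fun k => u (n - 1 - k)%nat)) by (intros; f_equal; lia).
  rewrite !Nat.sub_0_r. ring.
Qed.

Lemma Cmod_Csum_le n u B : (forall k, (k < n)%nat -> Cmod (u k) <= B) ->
  Cmod (Csum n u) <= INR n * B.
Proof.
  induction n as [|n IH]; intros H.
  - simpl. rewrite Cmod_0. lra.
  - simpl Csum. eapply Rle_trans; [apply Cmod_triangle|].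
    rewrite S_INR. pose proof (H n ltac:(lia)). pose proof (IH ltac:(intros; apply H; lia)). lra.
Qed.

Definition zsum (a : Z) (n : nat) (f : Z -> C) : C :=
  Csum n (fun k => f (a + Z.of_nat k)%Z).

Lemma zsum_ext a n f g : (forall z, f z = g z) -> zsum a n f = zsum a n g.
Proof. intros H. apply Csum_ext. intros; apply H. Qed.

Lemma zsum_minus a n f g :
  zsum a n (fun z => Cminus (f z) (g z)) = Cminus (zsum a n f) (zsum a n g).
Proof. apply Csum_minus. Qed.

Lemma zsum_shift a n b f : zsum a n (fun z => f (z + b)%Z) = zsum (a + b) n f.
Proof. apply Csum_ext. intros. f_equal. lia. Qed.

Lemma zsum_telescope a n f :
  zsum a n (fun z => Cminus (f (z + 1)%Z) (f z)) = Cminus (f (a + Z.of_nat n)%Z) (f a).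
Proof.
  induction n as [|n IH]; unfold zsum in *; simpl Csum.
  - rewrite Z.add_0_r. ring.
  - rewrite IH. replace (a + Z.of_nat n + 1)%Z with (a + Z.of_nat (S n))%Z by lia. ring.
Qed.

Lemma zsum_reflect a n c f : zsum a n (fun z => f (c - z)%Z) = zsum (c - a - Z.of_nat n + 1) n f.
Proof.
  unfold zsum. rewrite <- Csum_rev. apply Csum_ext. intros k Hk. f_equal.
  rewrite !Nat2Z.inj_sub by lia. simpl. lia.
Qed.

Lemma zsum_split M f : zsum (- Z.of_nat M) (2 * M) f =
  Cplus (Csum M (fun k => f (- Z.of_nat k - 1)%Z)) (Csum M (fun k => f (Z.of_nat k))).
Proof.
  unfold zsum. replace (2 * M)%nat with (M + M)%nat by lia. rewrite Csum_app. f_equal.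
  - rewrite <- Csum_rev. apply Csum_ext. intros k Hk. f_equal.
    rewrite !Nat2Z.inj_sub by lia. simpl. lia.
  - apply Csum_ext. intros k Hk. f_equal. lia.
Qed.

Lemma Cmod_zsum_le a n f B : (forall k, (a <= k < a + Z.of_nat n)%Z -> Cmod (f k) <= B) ->
  Cmod (zsum a n f) <= INR n * B.
Proof. intros H. apply Cmod_Csum_le. intros k Hk. apply H. lia. Qed.

Definition sq (M : nat) (g : Z -> Z -> C) : C :=
  zsum (- Z.of_nat M) (2 * M) (fun r => zsum (- Z.of_nat M) (2 * M) (fun s => g r s)).

Lemma sq_ext M g h : (forall r s, g r s = h r s) -> sq M g = sq M h.
Proof. intros H. apply zsum_ext; intro; apply zsum_ext; intro; apply H. Qed.

Lemma sq_plus M g h : sq M (fun r s => Cplus (g r s) (h r s)) = Cplus (sq M g) (sq M h).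
Proof. unfold sq, zsum. rewrite <- Csum_plus. apply Csum_ext; intros; apply Csum_plus. Qed.

Lemma sq_minus M g h : sq M (fun r s => Cminus (g r s) (h r s)) = Cminus (sq M g) (sq M h).
Proof. unfold sq, zsum. rewrite <- Csum_minus. apply Csum_ext; intros; apply Csum_minus. Qed.

Lemma sq_scal M c g : sq M (fun r s => Cmult c (g r s)) = Cmult c (sq M g).
Proof. unfold sq, zsum. rewrite <- Csum_scal. apply Csum_ext; intros; apply Csum_scal. Qed.

Lemma sq_swap M g : sq M (fun r s => g s r) = sq M g.
Proof. apply Csum_swap. Qed.

(* Reflecting r |-> c - r amounts to translating by c + 1 (the square is [-M, M)). *)
Lemma sq_reflect_r M c g : sq M (fun r s => g (c - r)%Z s) = sq M (fun r s => g (r + (c + 1))%Z s).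
Proof.
  unfold sq. rewrite (zsum_reflect _ _ c (fun r => zsum _ _ (fun s => g r s))).
  rewrite (zsum_shift _ _ (c + 1) (fun r => zsum _ _ (fun s => g r s))). f_equal. lia.
Qed.

Lemma sq_reflect_s M c g : sq M (fun r s => g r (c - s)%Z) = sq M (fun r s => g r (s + (c + 1))%Z).
Proof.
  rewrite <- sq_swap, (sq_reflect_r M c (fun r s => g s r)), <- sq_swap. reflexivity.
Qed.

Lemma sq_quadrants M g : sq M g =
  Cplus (Cplus (Csum M (fun i => Csum M (fun j => g (- Z.of_nat i - 1)%Z (- Z.of_nat j - 1)%Z)))
               (Csum M (fun i => Csum M (fun j => g (- Z.of_nat i - 1)%Z (Z.of_nat j)))))
        (Cplus (Csum M (fun i => Csum M (fun j => g (Z.of_nat i) (- Z.of_nat j - 1)%Z)))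
               (Csum M (fun i => Csum M (fun j => g (Z.of_nat i) (Z.of_nat j))))).
Proof.
  unfold sq. rewrite zsum_split.
  erewrite (Csum_ext M (fun k => zsum _ _ (fun s => g (- Z.of_nat k - 1)%Z s)))
    by (intros; apply zsum_split).
  erewrite (Csum_ext M (fun k => zsum _ _ (fun s => g (Z.of_nat k) s)))
    by (intros; apply zsum_split).
  rewrite !Csum_plus. reflexivity.
Qed.

Definition Ccv0 (e : nat -> C) : Prop := is_lim_seq (fun M => Cmod (e M)) 0.
Definition Ccv (u : nat -> C) (l : C) : Prop := Ccv0 (fun M => Cminus (u M) l).

Lemma Ccv0_le e b : (forall M, Cmod (e M) <= b M) -> is_lim_seq b 0 -> Ccv0 e.
Proof.
  intros H Hb. apply (is_lim_seq_le_le (fun _ => 0) _ b); [|apply is_lim_seq_const|exact Hb].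
  intros; split; [apply Cmod_ge_0 | apply H].
Qed.

Lemma Ccv0_ext e f : (forall M, e M = f M) -> Ccv0 e -> Ccv0 f.
Proof. intros H. apply is_lim_seq_ext. intros; rewrite H; reflexivity. Qed.

Lemma Ccv0_plus e f : Ccv0 e -> Ccv0 f -> Ccv0 (fun M => Cplus (e M) (f M)).
Proof.
  intros He Hf. apply (Ccv0_le _ (fun M => Cmod (e M) + Cmod (f M))); [intros; apply Cmod_triangle|].
  replace (Finite 0) with (Finite (0 + 0)) by (f_equal; ring). apply is_lim_seq_plus'; assumption.
Qed.

Lemma Ccv0_scal c e : Ccv0 e -> Ccv0 (fun M => Cmult c (e M)).
Proof.
  intros He. apply (Ccv0_le _ (fun M => Cmod c * Cmod (e M))); [intros; rewrite Cmod_mult; lra|].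
  replace (Finite 0) with (Rbar_mult (Cmod c) 0) by (simpl; f_equal; ring).
  apply is_lim_seq_scal_l; assumption.
Qed.

Lemma Ccv0_minus e f : Ccv0 e -> Ccv0 f -> Ccv0 (fun M => Cminus (e M) (f M)).
Proof.
  intros He Hf. apply (Ccv0_ext (fun M => Cplus (e M) (Cmult (RtoC (-1)) (f M)))).
  - intros; unfold Cminus; ring.
  - apply Ccv0_plus; [exact He | apply Ccv0_scal, Hf].
Qed.

Lemma Ccv_transfer u v c l : Ccv v l -> Ccv0 (fun M => Cminus (u M) (Cmult c (v M))) ->
  Ccv u (Cmult c l).
Proof.
  intros Hv Huv. apply (Ccv0_ext (fun M => Cplus (Cminus (u M) (Cmult c (v M)))
                                               (Cmult c (Cminus (v M) l)))).
  - intros; ring.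
  - apply Ccv0_plus; [exact Huv | apply Ccv0_scal, Hv].
Qed.

Lemma Ccv0_components e :
  Ccv0 e -> is_lim_seq (fun M => fst (e M)) 0 /\ is_lim_seq (fun M => snd (e M)) 0.
Proof.
  intros He. split; apply is_lim_seq_abs_0;
    apply (is_lim_seq_le_le (fun _ => 0) _ (fun M => Cmod (e M)));
    try (apply is_lim_seq_const || exact He);
    intros M; pose proof (Rmax_Cmod (e M));
    pose proof (Rmax_l (Rabs (fst (e M))) (Rabs (snd (e M))));
    pose proof (Rmax_r (Rabs (fst (e M))) (Rabs (snd (e M))));
    split; try apply Rabs_pos; lra.
Qed.

Lemma Ccv_of_components u (l : C) : is_lim_seq (fun M => fst (u M)) (fst l) ->
  is_lim_seq (fun M => snd (u M)) (snd l) -> Ccv u l.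
Proof.
  intros H1 H2.
  assert (E1 : is_lim_seq (fun M => Rabs (fst (u M) - fst l)) 0).
  { apply (proj1 (is_lim_seq_abs_0 _)). replace (Finite 0) with (Rbar_minus (fst l) (fst l))
      by (simpl; f_equal; ring). apply is_lim_seq_minus'; [exact H1|apply is_lim_seq_const]. }
  assert (E2 : is_lim_seq (fun M => Rabs (snd (u M) - snd l)) 0).
  { apply (proj1 (is_lim_seq_abs_0 _)). replace (Finite 0) with (Rbar_minus (snd l) (snd l))
      by (simpl; f_equal; ring). apply is_lim_seq_minus'; [exact H2|apply is_lim_seq_const]. }
  apply (Ccv0_le _ (fun M => sqrt 2 * (Rabs (fst (u M) - fst l) + Rabs (snd (u M) - snd l)))).
  - intros M. eapply Rle_trans; [apply Cmod_2Rmax|]. apply Rmult_le_compat_l; [apply sqrt_pos|].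
    destruct (u M), l; simpl; unfold Rminus.
    pose proof (Rabs_pos (r + - r1)). pose proof (Rabs_pos (r0 + - r2)).
    apply Rmax_lub; lra.
  - replace (Finite 0) with (Rbar_mult (sqrt 2) (0 + 0)) by (simpl; f_equal; ring).
    apply is_lim_seq_scal_l, is_lim_seq_plus'; assumption.
Qed.

Lemma Clim_Ccv u l : Ccv u l -> Clim u = l.
Proof.
  intros H. destruct (Ccv0_components _ H) as [H1 H2]. unfold Clim.
  assert (L1 : is_lim_seq (fun M => fst (u M)) (fst l)).
  { apply (is_lim_seq_ext (fun M => fst (Cminus (u M) l) + fst l)); [intros; simpl; ring|].
    replace (Finite (fst l)) with (Rbar_plus 0 (fst l)) by (simpl; f_equal; ring).
    apply is_lim_seq_plus'; [exact H1|apply is_lim_seq_const]. }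
  assert (L2 : is_lim_seq (fun M => snd (u M)) (snd l)).
  { apply (is_lim_seq_ext (fun M => snd (Cminus (u M) l) + snd l)); [intros; simpl; ring|].
    replace (Finite (snd l)) with (Rbar_plus 0 (snd l)) by (simpl; f_equal; ring).
    apply is_lim_seq_plus'; [exact H2|apply is_lim_seq_const]. }
  rewrite (is_lim_seq_unique _ _ L1), (is_lim_seq_unique _ _ L2). destruct l; reflexivity.
Qed.

Lemma Clim_ext u v : (forall M, u M = v M) -> Clim u = Clim v.
Proof.
  intros H. unfold Clim.
  rewrite (Lim_seq_ext (fun n => fst (u n)) (fun n => fst (v n))) by (intros; rewrite H; reflexivity).
  rewrite (Lim_seq_ext (fun n => snd (u n)) (fun n => snd (v n))) by (intros; rewrite H; reflexivity).
  reflexivity.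
Qed.

Lemma Ccv_geometric u K rho : 0 <= rho < 1 ->
  (forall M, Cmod (Cminus (u (S M)) (u M)) <= K * rho ^ M) -> exists l, Ccv u l.
Proof.
  intros Hrho Hd. set (d := fun M => Cminus (u (S M)) (u M)).
  assert (Hgeo : ex_series (fun M => rho ^ M * K)).
  { apply ex_series_scal_r, ex_series_geom. rewrite Rabs_pos_eq; lra. }
  assert (Hpart : forall (p : C -> R), (forall z, Rabs (p z) <= Cmod z) ->
                  ex_series (fun M => p (d M))).
  { intros p Hp. apply (@ex_series_le R_AbsRing R_CompleteNormedModule _ (fun M => rho ^ M * K));
      [|exact Hgeo].
    intros M. change (norm (p (d M))) with (Rabs (p (d M))).
    rewrite Rmult_comm. eapply Rle_trans; [apply Hp | apply Hd]. }
  destruct (Hpart fst) as [l1 L1].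
  { intros z. pose proof (Rmax_Cmod z). pose proof (Rmax_l (Rabs (fst z)) (Rabs (snd z))). lra. }
  destruct (Hpart snd) as [l2 L2].
  { intros z. pose proof (Rmax_Cmod z). pose proof (Rmax_r (Rabs (fst z)) (Rabs (snd z))). lra. }
  assert (Htel : forall p : C -> R, (forall z w, p (Cminus z w) = p z - p w) ->
                 forall n, sum_n (fun M => p (d M)) n = p (u (S n)) - p (u O)).
  { intros p Hp n. induction n as [|n IH].
    - rewrite sum_O. apply Hp.
    - rewrite sum_Sn, IH. unfold d. rewrite Hp. change plus with Rplus. lra. }
  exists (Cplus (u O) (l1, l2)). apply Ccv_of_components; apply is_lim_seq_incr_1.
  - apply (is_lim_seq_ext (fun n => fst (u O) + sum_n (fun M => fst (d M)) n)).
    + intros n. rewrite (Htel fst) by reflexivity. ring.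
    + apply is_lim_seq_plus'; [apply is_lim_seq_const|exact L1].
  - apply (is_lim_seq_ext (fun n => snd (u O) + sum_n (fun M => snd (d M)) n)).
    + intros n. rewrite (Htel snd) by reflexivity. ring.
    + apply is_lim_seq_plus'; [apply is_lim_seq_const|exact L2].
Qed.

Lemma exp_mono x y : x <= y -> exp x <= exp y.
Proof. intros [H|H]; [left; apply exp_increasing, H | right; subst; reflexivity]. Qed.

Lemma exp_nat x n : exp (x * INR n) = exp x ^ n.
Proof.
  induction n as [|n IH]; [simpl; rewrite Rmult_0_r, exp_0; reflexivity|].
  rewrite S_INR. simpl pow. rewrite <- IH, <- exp_plus. f_equal. ring.
Qed.

Lemma exp_geometric_bound lam M : 0 < lam ->
  exp (- lam * INR M) <= exp (- lam / 2) ^ M /\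
  INR M * exp (- lam * INR M) <= (2 / lam) * exp (- lam / 2) ^ M.
Proof.
  intros Hl. rewrite <- exp_nat. pose proof (pos_INR M).
  assert (E : exp (- lam / 2 * INR M) = exp (lam * INR M / 2) * exp (- lam * INR M))
    by (rewrite <- exp_plus; f_equal; field).
  pose proof (exp_ineq1_le (lam * INR M / 2)). pose proof (exp_pos (- lam * INR M)).
  assert (INR M <= 2 / lam * exp (lam * INR M / 2)).
  { apply Rmult_le_reg_l with (lam / 2); [lra|].
    replace (lam / 2 * (2 / lam * exp (lam * INR M / 2))) with (exp (lam * INR M / 2))
      by (field; lra). nra. }
  assert (1 <= exp (lam * INR M / 2)) by (assert (0 <= lam * INR M) by nra; lra).
  rewrite E. split; [nra|]. rewrite <- Rmult_assoc. apply Rmult_le_compat_r; lra.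
Qed.

Lemma geometric_lim K lam : 0 < lam -> is_lim_seq (fun M => K * exp (- lam / 2) ^ M) 0.
Proof.
  intros Hl. replace (Finite 0) with (Rbar_mult K 0) by (simpl; f_equal; ring).
  apply is_lim_seq_scal_l, is_lim_seq_geom.
  rewrite Rabs_pos_eq by (left; apply exp_pos).
  rewrite <- exp_0. apply exp_increasing. lra.
Qed.

Definition decays (lam : R) (g : Z -> Z -> C) : Prop :=
  exists K, forall r s, Cmod (g r s) <= K * exp (- lam * (Rabs (IZR r) + Rabs (IZR s))).

Lemma decay_const_nonneg lam g K :
  (forall r s, Cmod (g r s) <= K * exp (- lam * (Rabs (IZR r) + Rabs (IZR s)))) -> 0 <= K.
Proof.
  intros H. specialize (H 0%Z 0%Z). pose proof (Cmod_ge_0 (g 0%Z 0%Z)).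
  pose proof (exp_pos (- lam * (Rabs (IZR 0) + Rabs (IZR 0)))). nra.
Qed.

Lemma decay_far lam g K t r s : 0 < lam ->
  (forall r s, Cmod (g r s) <= K * exp (- lam * (Rabs (IZR r) + Rabs (IZR s)))) ->
  t <= Rabs (IZR r) + Rabs (IZR s) -> Cmod (g r s) <= K * exp (- lam * t).
Proof.
  intros Hl H Ht. pose proof (decay_const_nonneg _ _ _ H). eapply Rle_trans; [apply H|].
  apply Rmult_le_compat_l; [assumption|]. apply exp_mono. nra.
Qed.

Lemma decays_ext lam g h : (forall r s, g r s = h r s) -> decays lam g -> decays lam h.
Proof. intros E [K H]. exists K. intros r s. rewrite <- E. apply H. Qed.

Lemma decays_swap lam g : decays lam g -> decays lam (fun r s => g s r).
Proof. intros [K H]. exists K. intros r s. rewrite Rplus_comm. apply H. Qed.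

Lemma decays_plus lam g h : decays lam g -> decays lam h -> decays lam (fun r s => Cplus (g r s) (h r s)).
Proof.
  intros [K1 H1] [K2 H2]. exists (K1 + K2). intros r s.
  eapply Rle_trans; [apply Cmod_triangle|]. specialize (H1 r s). specialize (H2 r s). lra.
Qed.

Lemma decays_scal lam c g : decays lam g -> decays lam (fun r s => Cmult c (g r s)).
Proof.
  intros [K H]. exists (Cmod c * K). intros r s. rewrite Cmod_mult, Rmult_assoc.
  apply Rmult_le_compat_l; [apply Cmod_ge_0|apply H].
Qed.

Lemma decays_shift lam g a b : 0 < lam -> decays lam g -> decays lam (fun r s => g (r + a)%Z (s + b)%Z).
Proof.
  intros Hl [K H]. pose proof (decay_const_nonneg _ _ _ H) as HK.
  exists (K * exp (lam * (Rabs (IZR a) + Rabs (IZR b)))). intros r s.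
  eapply Rle_trans; [apply H|]. rewrite Rmult_assoc. apply Rmult_le_compat_l; [exact HK|].
  rewrite <- exp_plus. apply exp_mono. rewrite !plus_IZR.
  pose proof (Rabs_triang (IZR r + IZR a) (- IZR a)). pose proof (Rabs_triang (IZR s + IZR b) (- IZR b)).
  rewrite Rabs_Ropp in *. replace (IZR r + IZR a + - IZR a) with (IZR r) in * by ring.
  replace (IZR s + IZR b + - IZR b) with (IZR s) in * by ring. nra.
Qed.

Lemma zsum_widen a n f : zsum (a - 1) (S (S n)) f =
  Cplus (Cplus (f (a - 1)%Z) (zsum a n f)) (f (a + Z.of_nat n)%Z).
Proof.
  unfold zsum. rewrite <- Nat.add_1_l, Csum_app.
  rewrite (Csum_ext (S n) (fun k => f (a - 1 + Z.of_nat (1 + k))%Z) (fun k => f (a + Z.of_nat k)%Z))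
    by (intros; f_equal; lia).
  simpl Csum. rewrite Z.add_0_r. ring.
Qed.

(* The part of [-M-1, M+1)^2 outside [-M, M)^2: two full columns s = -M-1, s = M, and
   the rows r = -M-1, r = M restricted to s in [-M, M). *)
Definition sq_border (M : nat) (g : Z -> Z -> C) : C :=
  Cplus (zsum (- Z.of_nat (S M)) (2 * S M)
           (fun r => Cplus (g r (- Z.of_nat M - 1)%Z) (g r (Z.of_nat M))))
        (Cplus (zsum (- Z.of_nat M) (2 * M) (fun s => g (- Z.of_nat M - 1)%Z s))
               (zsum (- Z.of_nat M) (2 * M) (fun s => g (Z.of_nat M) s))).

Lemma sq_succ M g : sq (S M) g = Cplus (sq M g) (sq_border M g).
Proof.
  unfold sq, sq_border. replace (2 * S M)%nat with (S (S (2 * M))) by lia.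
  replace (- Z.of_nat (S M))%Z with (- Z.of_nat M - 1)%Z by lia.
  set (row r := zsum (- Z.of_nat M) (2 * M) (fun s => g r s)).
  rewrite (zsum_ext _ _ _ (fun r => Cplus (Cplus (g r (- Z.of_nat M - 1)%Z) (g r (Z.of_nat M))) (row r)))
    by (intros r; rewrite zsum_widen; unfold row; replace (- Z.of_nat M + Z.of_nat (2 * M))%Z
          with (Z.of_nat M) by lia; ring).
  unfold zsum at 1. rewrite Csum_plus. fold (zsum (- Z.of_nat M - 1) (S (S (2 * M)))
    (fun r => Cplus (g r (- Z.of_nat M - 1)%Z) (g r (Z.of_nat M)))).
  change (Csum (S (S (2 * M))) (fun k => row (- Z.of_nat M - 1 + Z.of_nat k)%Z))
    with (zsum (- Z.of_nat M - 1) (S (S (2 * M))) row).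
  rewrite (zsum_widen _ _ row). replace (- Z.of_nat M + Z.of_nat (2 * M))%Z with (Z.of_nat M) by lia.
  unfold row. ring.
Qed.

Section DecayingSquares.

Variable lam : R.
Hypothesis lam_pos : 0 < lam.

(* The border, hence the increment of the square sums, is exponentially small:
   it has 8M + 4 terms, all outside the diamond |r| + |s| < M. *)
Lemma sq_increment_bound g K M :
  (forall r s, Cmod (g r s) <= K * exp (- lam * (Rabs (IZR r) + Rabs (IZR s)))) ->
  Cmod (Cminus (sq (S M) g) (sq M g)) <= K * (8 * INR M + 4) * exp (- lam * INR M).
Proof.
  intros H. set (e := K * exp (- lam * INR M)).
  assert (Hrow : forall r s, INR M <= Rabs (IZR r) -> Cmod (g r s) <= e).
  { intros r s Hr. apply (decay_far lam g); [exact lam_pos|exact H|].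
    pose proof (Rabs_pos (IZR s)). lra. }
  assert (Hcol : forall r s, INR M <= Rabs (IZR s) -> Cmod (g r s) <= e).
  { intros r s Hs. apply (decay_far lam g); [exact lam_pos|exact H|].
    pose proof (Rabs_pos (IZR r)). lra. }
  assert (Hlo : INR M <= Rabs (IZR (- Z.of_nat M - 1))).
  { rewrite INR_IZR_INZ, Rabs_left1 by (apply IZR_le; lia).
    rewrite <- opp_IZR. apply IZR_le. lia. }
  assert (Hhi : INR M <= Rabs (IZR (Z.of_nat M))).
  { rewrite INR_IZR_INZ, Rabs_pos_eq by (apply IZR_le; lia). lra. }
  rewrite sq_succ. replace (Cminus (Cplus (sq M g) (sq_border M g)) (sq M g))
    with (sq_border M g) by ring.
  unfold sq_border. eapply Rle_trans; [apply Cmod_triangle|].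
  eapply Rle_trans; [apply Rplus_le_compat_l, Cmod_triangle|].
  pose proof (Cmod_zsum_le (- Z.of_nat (S M)) (2 * S M)
    (fun r => Cplus (g r (- Z.of_nat M - 1)%Z) (g r (Z.of_nat M))) (e + e)) as HA.
  pose proof (Cmod_zsum_le (- Z.of_nat M) (2 * M) (fun s => g (- Z.of_nat M - 1)%Z s) e) as HB.
  pose proof (Cmod_zsum_le (- Z.of_nat M) (2 * M) (fun s => g (Z.of_nat M) s) e) as HD.
  rewrite mult_INR, (S_INR M) in HA. rewrite mult_INR in HB, HD.
  replace (INR 2) with 2 in HA, HB, HD by (simpl; ring).
  assert (Hcols : forall k, Cmod (Cplus (g k (- Z.of_nat M - 1)%Z) (g k (Z.of_nat M))) <= e + e)
    by (intros k; eapply Rle_trans; [apply Cmod_triangle|]; apply Rplus_le_compat; apply Hcol; assumption).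
  specialize (HA ltac:(intros; apply Hcols)).
  specialize (HB ltac:(intros; apply Hrow, Hlo)). specialize (HD ltac:(intros; apply Hrow, Hhi)).
  unfold e in *. lra.
Qed.

Lemma sq_converges g : decays lam g -> exists l, Ccv (fun M => sq M g) l.
Proof.
  intros [K H]. pose proof (decay_const_nonneg _ _ _ H) as HK.
  apply (Ccv_geometric _ (K * (16 / lam + 4)) (exp (- lam / 2))).
  - split; [left; apply exp_pos|]. rewrite <- exp_0. apply exp_increasing. lra.
  - intros M. eapply Rle_trans; [apply (sq_increment_bound g K M H)|].
    destruct (exp_geometric_bound lam M lam_pos) as [B0 B1].
    replace (K * (8 * INR M + 4) * exp (- lam * INR M))
      with (K * (8 * (INR M * exp (- lam * INR M)) + 4 * exp (- lam * INR M))) by ring.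
    replace (K * (16 / lam + 4) * exp (- lam / 2) ^ M)
      with (K * (8 * (2 / lam * exp (- lam / 2) ^ M) + 4 * exp (- lam / 2) ^ M)) by (field; lra).
    apply Rmult_le_compat_l; lra.
Qed.

Lemma sq_translate_s1 g : decays lam g ->
  Ccv0 (fun M => Cminus (sq M (fun r s => g r (s + 1)%Z)) (sq M g)).
Proof.
  intros [K H]. pose proof (decay_const_nonneg _ _ _ H) as HK.
  apply (Ccv0_le _ (fun M => (4 * K * (2 / lam)) * exp (- lam / 2) ^ M));
    [|apply geometric_lim, lam_pos].
  intros M. unfold sq. rewrite <- zsum_minus.
  rewrite (zsum_ext _ _ _ (fun r => Cminus (g r (Z.of_nat M)) (g r (- Z.of_nat M)%Z))).
  2:{ intros r. rewrite <- zsum_minus, (zsum_telescope _ _ (fun s => g r s)). do 2 f_equal. lia. }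
  eapply Rle_trans.
  - apply (Cmod_zsum_le _ _ _ (2 * (K * exp (- lam * INR M)))). intros k _.
    unfold Cminus. eapply Rle_trans; [apply Cmod_triangle|]. rewrite Cmod_opp.
    assert (Hfar : forall z, INR M <= Rabs (IZR z) -> Cmod (g k z) <= K * exp (- lam * INR M)).
    { intros z Hz. apply (decay_far lam g); [exact lam_pos|exact H|].
      pose proof (Rabs_pos (IZR k)). lra. }
    pose proof (Hfar (Z.of_nat M)) as H1. pose proof (Hfar (- Z.of_nat M)%Z) as H2.
    rewrite opp_IZR, Rabs_Ropp in H2. rewrite <- INR_IZR_INZ, Rabs_pos_eq in H1, H2 by apply pos_INR.
    specialize (H1 (Rle_refl _)). specialize (H2 (Rle_refl _)). lra.
  - destruct (exp_geometric_bound lam M lam_pos) as [_ B1]. rewrite mult_INR. simpl INR.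
    replace (4 * K * (2 / lam) * exp (- lam / 2) ^ M) with (4 * K * (2 / lam * exp (- lam / 2) ^ M))
      by ring.
    replace ((1 + 1) * INR M * (2 * (K * exp (- lam * INR M))))
      with (4 * K * (INR M * exp (- lam * INR M))) by ring.
    apply Rmult_le_compat_l; lra.
Qed.

Lemma sq_translate_s_nat g n : decays lam g ->
  Ccv0 (fun M => Cminus (sq M (fun r s => g r (s + Z.of_nat n)%Z)) (sq M g)).
Proof.
  intros Hg. induction n as [|n IH].
  - apply (Ccv0_le _ (fun _ => 0)); [|apply is_lim_seq_const]. intros M.
    rewrite (sq_ext M _ g) by (intros; f_equal; lia). unfold Cminus. rewrite Cplus_opp_r, Cmod_0. lra.
  - set (h r s := g r (s + Z.of_nat n)%Z).
    assert (Hh : decays lam h) by (apply (decays_shift lam g 0 (Z.of_nat n)) in Hg;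
      [eapply decays_ext; [|exact Hg]; intros; unfold h; simpl; f_equal; lia | exact lam_pos]).
    apply (Ccv0_ext (fun M => Cplus (Cminus (sq M (fun r s => h r (s + 1)%Z)) (sq M h))
                                    (Cminus (sq M h) (sq M g)))).
    + intros M. rewrite (sq_ext M (fun r s => h r (s + 1)%Z) (fun r s => g r (s + Z.of_nat (S n))%Z))
        by (intros; unfold h; f_equal; lia). ring.
    + apply Ccv0_plus; [apply sq_translate_s1, Hh | exact IH].
Qed.

Lemma sq_translate_s g b : decays lam g ->
  Ccv0 (fun M => Cminus (sq M (fun r s => g r (s + b)%Z)) (sq M g)).
Proof.
  intros Hg. destruct (Z.le_gt_cases 0 b) as [Hb|Hb].
  - rewrite <- (Z2Nat.id b Hb). apply sq_translate_s_nat, Hg.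
  - set (h r s := g r (s + b)%Z).
    assert (Hh : decays lam h) by (apply (decays_shift lam g 0 b) in Hg;
      [eapply decays_ext; [|exact Hg]; intros; unfold h; simpl; f_equal; lia | exact lam_pos]).
    apply (Ccv0_ext (fun M => Cmult (RtoC (-1))
      (Cminus (sq M (fun r s => h r (s + Z.of_nat (Z.to_nat (- b)))%Z)) (sq M h)))).
    + intros M. rewrite (sq_ext M _ g) by (intros; unfold h; f_equal; lia). ring.
    + apply Ccv0_scal, sq_translate_s_nat, Hh.
Qed.

Lemma sq_translate g a b : decays lam g ->
  Ccv0 (fun M => Cminus (sq M (fun r s => g (r + a)%Z (s + b)%Z)) (sq M g)).
Proof.
  intros Hg. set (h r s := g r (s + b)%Z).
  assert (Hh : decays lam h) by (apply (decays_shift lam g 0 b) in Hg;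
    [eapply decays_ext; [|exact Hg]; intros; unfold h; simpl; f_equal; lia | exact lam_pos]).
  apply (Ccv0_ext (fun M => Cplus (Cminus (sq M (fun r s => h (s + a)%Z r)) (sq M (fun r s => h s r)))
                                  (Cminus (sq M h) (sq M g)))).
  - intros M. rewrite (sq_swap M (fun r s => h (r + a)%Z s)), (sq_swap M h).
    unfold h; cbv beta. ring.
  - apply Ccv0_plus; [apply (sq_translate_s (fun r s => h s r)), decays_swap, Hh|].
    apply sq_translate_s, Hg.
Qed.

Lemma sq_odd_r_vanishes c g : decays lam g -> (forall r s, g (c - r)%Z s = Copp (g r s)) ->
  Ccv0 (fun M => sq M g).
Proof.
  intros Hg Hodd.
  apply (Ccv0_ext (fun M => Cmult (RtoC (- / 2))
    (Cminus (sq M (fun r s => g (r + (c + 1))%Z (s + 0)%Z)) (sq M g)))).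
  - intros M.
    rewrite (sq_ext M _ (fun r s => g (r + (c + 1))%Z s)) by (intros; f_equal; lia).
    rewrite <- sq_reflect_r, (sq_ext M _ (fun r s => Cmult (RtoC (-1)) (g r s)))
      by (intros; rewrite Hodd; ring).
    rewrite sq_scal. destruct (sq M g) as [x y].
    unfold Cmult, Cminus, Copp, Cplus, RtoC; simpl. f_equal; field.
  - apply Ccv0_scal, sq_translate, Hg.
Qed.

Lemma sq_odd_s_vanishes c g : decays lam g -> (forall r s, g r (c - s)%Z = Copp (g r s)) ->
  Ccv0 (fun M => sq M g).
Proof.
  intros Hg Hodd. apply (Ccv0_ext (fun M => sq M (fun r s => g s r))); [intros; apply sq_swap|].
  apply (sq_odd_r_vanishes c); [apply decays_swap, Hg | intros; apply Hodd].
Qed.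

End DecayingSquares.

(* The binomial coefficient r (r - 1) / 2 is computed exactly in Z. *)
Lemma tri_IZR r : IZR (r * (r - 1) / 2) = IZR r * (IZR r - 1) / 2.
Proof.
  destruct (Z.Even_or_Odd r) as [[k ->]|[k ->]].
  - replace (2 * k * (2 * k - 1))%Z with ((k * (2 * k - 1)) * 2)%Z by ring.
    rewrite Z.div_mul by lia. rewrite ?mult_IZR, ?minus_IZR, ?plus_IZR, ?mult_IZR. field.
  - replace ((2 * k + 1) * (2 * k + 1 - 1))%Z with ((k * (2 * k + 1)) * 2)%Z by ring.
    rewrite Z.div_mul by lia. rewrite ?mult_IZR, ?minus_IZR, ?plus_IZR, ?mult_IZR. field.
Qed.

Ltac izr := repeat (rewrite ?plus_IZR, ?minus_IZR, ?mult_IZR, ?opp_IZR).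

Definition qexp (N : nat) (a b : R) (r s : Z) : R :=
  a * IZR r + b * IZR s
  + (IZR r * (IZR r - 1) / 2 + (INR N + 1) * IZR r * IZR s + IZR s * (IZR s - 1) / 2).

Definition hterm (tau : C) (N : nat) (a b : R) (r s : Z) : C :=
  Cmult (sg (r + s)) (qpow tau (qexp N a b r s)).

Definition weighted (tau : C) (N : nat) (a b : R) (v : Z -> Z -> R) (r s : Z) : C :=
  Cmult (RtoC (v r s)) (hterm tau N a b r s).

Definition hecke_weight (r s : Z) : R :=
  if andb (0 <=? r)%Z (0 <=? s)%Z then 1
  else if andb (r <? 0)%Z (s <? 0)%Z then -1 else 0.

Definition fN (tau : C) (N : nat) (a b : R) : C :=
  hecke_f 1 (1 + Z.of_nat N) 1 (qpow tau a) (qpow tau b) (qpow tau 1).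

Lemma hecke_term_eq tau N a b r s :
  hecke_term 1 (1 + Z.of_nat N) 1 (qpow tau a) (qpow tau b) (qpow tau 1) r s = hterm tau N a b r s.
Proof.
  unfold hecke_term, hterm. rewrite Czpow_m1, !Czpow_qpow, <- !qpow_add. do 2 f_equal.
  unfold qexp. rewrite !plus_IZR, !mult_IZR, !tri_IZR, plus_IZR, <- INR_IZR_INZ. ring.
Qed.

Lemma Csum2_const_weight M (w : nat -> nat -> R) c f : (forall i j, w i j = c) ->
  Csum M (fun i => Csum M (fun j => Cmult (RtoC (w i j)) (f i j)))
  = Cmult (RtoC c) (Csum M (fun i => Csum M (fun j => f i j))).
Proof.
  intros H. rewrite <- Csum_scal. apply Csum_ext. intros i _.
  rewrite <- Csum_scal. apply Csum_ext. intros j _. rewrite H. reflexivity.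
Qed.

Lemma sq_hecke_weight M g :
  sq M (fun r s => Cmult (RtoC (hecke_weight r s)) (g r s)) =
  Cminus (Csum M (fun i => Csum M (fun j => g (Z.of_nat i) (Z.of_nat j))))
         (Csum M (fun i => Csum M (fun j => g (- Z.of_nat i - 1)%Z (- Z.of_nat j - 1)%Z))).
Proof.
  rewrite sq_quadrants.
  erewrite (Csum2_const_weight M _ (-1)), (Csum2_const_weight M _ 0), (Csum2_const_weight M _ 0),
    (Csum2_const_weight M _ 1).
  - replace (RtoC (-1)) with (Copp (RtoC 1)) by (apply injective_projections; simpl; ring).
    ring.
  - intros i j. unfold hecke_weight.
    destruct (Z.leb_spec 0 (Z.of_nat i)), (Z.leb_spec 0 (Z.of_nat j)); try lia. reflexivity.
  - intros i j. unfold hecke_weight.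
    destruct (Z.leb_spec 0 (Z.of_nat i)), (Z.leb_spec 0 (- Z.of_nat j - 1)); try lia.
    destruct (Z.ltb_spec (Z.of_nat i) 0); try lia. reflexivity.
  - intros i j. unfold hecke_weight.
    destruct (Z.leb_spec 0 (- Z.of_nat i - 1)); try lia.
    destruct (Z.ltb_spec (- Z.of_nat i - 1) 0), (Z.ltb_spec (Z.of_nat j) 0); try lia. reflexivity.
  - intros i j. unfold hecke_weight.
    destruct (Z.leb_spec 0 (- Z.of_nat i - 1)); try lia.
    destruct (Z.ltb_spec (- Z.of_nat i - 1) 0), (Z.ltb_spec (- Z.of_nat j - 1) 0); try lia. reflexivity.
Qed.

Lemma fN_square_limit tau N a b :
  fN tau N a b = Clim (fun M => sq M (weighted tau N a b hecke_weight)).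
Proof.
  unfold fN, hecke_f. apply Clim_ext. intros M. unfold weighted. rewrite sq_hecke_weight.
  f_equal; apply Csum_ext; intros; apply Csum_ext; intros; apply hecke_term_eq.
Qed.

Lemma rate_pos tau : 0 < snd tau -> 0 < rate tau.
Proof. intros. unfold rate. pose proof PI_RGT_0. nra. Qed.

Lemma Cmod_hterm tau N a b r s : Cmod (hterm tau N a b r s) = exp (- rate tau * qexp N a b r s).
Proof. unfold hterm. rewrite Cmod_mult, Cmod_sg, Cmod_qpow, Rmult_1_l. reflexivity. Qed.

Lemma weighted_decays tau N a b v : 0 < snd tau -> (forall r s, Rabs (v r s) <= 1) ->
  (exists C, forall r s, v r s <> 0 -> Rabs (IZR r) + Rabs (IZR s) - C <= qexp N a b r s) ->
  decays (rate tau) (weighted tau N a b v).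
Proof.
  intros Ht Hv [C HC]. pose proof (rate_pos tau Ht) as Hl.
  exists (exp (rate tau * C)). intros r s. unfold weighted.
  rewrite Cmod_mult, Cmod_R, Cmod_hterm, <- exp_plus.
  destruct (Req_dec (v r s) 0) as [E|E].
  - rewrite E, Rabs_R0, Rmult_0_l. left; apply exp_pos.
  - specialize (HC r s E). specialize (Hv r s).
    apply Rle_trans with (1 * exp (- rate tau * qexp N a b r s)).
    + apply Rmult_le_compat_r; [left; apply exp_pos | exact Hv].
    + rewrite Rmult_1_l. apply exp_mono. nra.
Qed.

Definition quad_const (a : R) : R := ((a - 3/2) ^ 2 + (a + 1/2) ^ 2) / 2.

Lemma quad_bound a x : Rabs x - quad_const a <= x * (x - 1) / 2 + a * x.
Proof.
  unfold quad_const. pose proof (pow2_ge_0 (x + a - 3/2)). pose proof (pow2_ge_0 (x + a + 1/2)).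
  pose proof (pow2_ge_0 (a - 3/2)). pose proof (pow2_ge_0 (a + 1/2)).
  destruct (Rle_or_lt 0 x); [rewrite Rabs_pos_eq by lra | rewrite Rabs_left by lra]; nra.
Qed.

(* On the two quadrants r, s >= 0 and r, s < 0 the cross term r s is nonnegative. *)
Lemma hecke_weight_support N a b :
  exists C, forall r s, hecke_weight r s <> 0 -> Rabs (IZR r) + Rabs (IZR s) - C <= qexp N a b r s.
Proof.
  exists (quad_const a + quad_const b). intros r s Hw.
  assert (Hrs : 0 <= IZR r * IZR s).
  { unfold hecke_weight in Hw.
    destruct (Z.leb_spec 0 r), (Z.leb_spec 0 s); simpl in Hw;
      try (apply Rmult_le_pos; apply IZR_le; lia);
      destruct (Z.ltb_spec r 0), (Z.ltb_spec s 0); simpl in Hw; try lra; try lia.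
    replace (IZR r * IZR s) with ((- IZR r) * (- IZR s)) by ring.
    apply Rmult_le_pos; rewrite <- opp_IZR; apply IZR_le; lia. }
  pose proof (quad_bound a (IZR r)). pose proof (quad_bound b (IZR s)). pose proof (pos_INR N).
  assert (0 <= (INR N + 1) * IZR r * IZR s) by (rewrite Rmult_assoc; apply Rmult_le_pos; lra).
  unfold qexp. lra.
Qed.

Lemma hecke_weight_bound r s : Rabs (hecke_weight r s) <= 1.
Proof.
  unfold hecke_weight. destruct (_ && _)%bool; [|destruct (_ && _)%bool];
    rewrite ?Rabs_R1, ?Rabs_R0, ?Rabs_m1; lra.
Qed.

(* Indicators of the lines r = 0 and s = -1, which appear as boundary corrections. *)
Definition line_r0 (r s : Z) : R := if Z.eqb r 0 then 1 else 0.
Definition line_sm1 (r s : Z) : R := if Z.eqb s (-1) then 1 else 0.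

Lemma line_r0_bound r s : Rabs (line_r0 r s) <= 1.
Proof. unfold line_r0. destruct (Z.eqb r 0); rewrite ?Rabs_R1, ?Rabs_R0; lra. Qed.

Lemma line_sm1_bound r s : Rabs (line_sm1 r s) <= 1.
Proof. unfold line_sm1. destruct (Z.eqb s (-1)); rewrite ?Rabs_R1, ?Rabs_R0; lra. Qed.

(* On the lines r = 0 and s = -1 the exponent is a quadratic in one variable. *)
Lemma line_r0_support N a b :
  exists C, forall r s, line_r0 r s <> 0 -> Rabs (IZR r) + Rabs (IZR s) - C <= qexp N a b r s.
Proof.
  exists (quad_const b). intros r s Hw. unfold line_r0 in Hw.
  destruct (Z.eqb_spec r 0); [subst|lra].
  pose proof (quad_bound b (IZR s)). unfold qexp. rewrite Rabs_R0. lra.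
Qed.

Lemma line_sm1_support N a b :
  exists C, forall r s, line_sm1 r s <> 0 -> Rabs (IZR r) + Rabs (IZR s) - C <= qexp N a b r s.
Proof.
  exists (quad_const (a - INR N - 1) + Rabs b). intros r s Hw. unfold line_sm1 in Hw.
  destruct (Z.eqb_spec s (-1)); [subst|lra].
  pose proof (quad_bound (a - INR N - 1) (IZR r)). pose proof (Rle_abs b).
  replace (Rabs (IZR (-1))) with 1 by (rewrite Rabs_left; simpl; lra).
  unfold qexp. replace (IZR (-1)) with (-1) by reflexivity. lra.
Qed.

Lemma hecke_decays tau N a b : 0 < snd tau -> decays (rate tau) (weighted tau N a b hecke_weight).
Proof. intros Ht. apply weighted_decays; [exact Ht|apply hecke_weight_bound|apply hecke_weight_support]. Qed.

Lemma line_r0_decays tau N a b : 0 < snd tau -> decays (rate tau) (weighted tau N a b line_r0).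
Proof. intros Ht. apply weighted_decays; [exact Ht|apply line_r0_bound|apply line_r0_support]. Qed.

Lemma line_sm1_decays tau N a b : 0 < snd tau -> decays (rate tau) (weighted tau N a b line_sm1).
Proof. intros Ht. apply weighted_decays; [exact Ht|apply line_sm1_bound|apply line_sm1_support]. Qed.

(* Along the line r = 0 with b integral, the terms are odd under s |-> 1 - 2 b - s,
   so their square sums vanish in the limit. *)
Lemma line_r0_vanishes tau N a b k : 0 < snd tau -> b = IZR k ->
  Ccv0 (fun M => sq M (weighted tau N a b line_r0)).
Proof.
  intros Ht Hk. apply (sq_odd_s_vanishes (rate tau) (rate_pos tau Ht) (1 - 2 * k)%Z).
  - apply line_r0_decays, Ht.
  - intros r s. unfold weighted, line_r0. destruct (Z.eqb_spec r 0); [subst r|simpl; ring].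
    unfold hterm. rewrite (sg_odd_sum (0 + (1 - 2 * k - s)) (0 + s)).
    2:{ replace (0 + (1 - 2 * k - s) + (0 + s))%Z with (2 * (- k) + 1)%Z by ring. apply Z.even_odd. }
    replace (qexp N a b 0 (1 - 2 * k - s)) with (qexp N a b 0 s); [ring|].
    unfold qexp. izr. rewrite Hk. field.
Qed.

(* Along the line s = -1 with a - N integral, the terms are odd under r |-> 3 - 2 (a - N) - r. *)
Lemma line_sm1_vanishes tau N a b k : 0 < snd tau -> a - INR N = IZR k ->
  Ccv0 (fun M => sq M (weighted tau N a b line_sm1)).
Proof.
  intros Ht Hk. apply (sq_odd_r_vanishes (rate tau) (rate_pos tau Ht) (3 - 2 * k)%Z).
  - apply line_sm1_decays, Ht.
  - intros r s. unfold weighted, line_sm1. destruct (Z.eqb_spec s (-1)); [subst s|simpl; ring].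
    unfold hterm. rewrite (sg_odd_sum (3 - 2 * k - r + -1) (r + -1)).
    2:{ replace (3 - 2 * k - r + -1 + (r + -1))%Z with (2 * (- k) + 1)%Z by ring. apply Z.even_odd. }
    replace (qexp N a b (3 - 2 * k - r) (-1)) with (qexp N a b r (-1)); [ring|].
    unfold qexp. izr. replace a with (INR N + IZR k) by lra. field.
Qed.

Lemma square_relation lam g H W E c p q : 0 < lam -> decays lam W -> decays lam E ->
  (forall M, sq M g = Cmult c (sq M (fun r s => H (r + p)%Z (s + q)%Z))) ->
  (forall r s, H r s = Cplus (W r s) (E r s)) -> Ccv0 (fun M => sq M E) ->
  Ccv0 (fun M => Cminus (sq M g) (Cmult c (sq M W))).
Proof.
  intros Hl dW dE Hg HWE HE.
  assert (HH : decays lam H) by (apply (decays_ext lam (fun r s => Cplus (W r s) (E r s)));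
    [intros; symmetry; apply HWE | apply decays_plus; assumption]).
  apply (Ccv0_ext (fun M => Cmult c (Cplus
    (Cminus (sq M (fun r s => H (r + p)%Z (s + q)%Z)) (sq M H)) (sq M E)))).
  - intros M. rewrite Hg, (sq_ext M H _ HWE), sq_plus. ring.
  - apply Ccv0_scal, Ccv0_plus; [apply (sq_translate lam Hl), HH | exact HE].
Qed.

Lemma fN_relation tau N a b a' b' c : 0 < snd tau ->
  Ccv0 (fun M => Cminus (sq M (weighted tau N a b hecke_weight))
                        (Cmult c (sq M (weighted tau N a' b' hecke_weight)))) ->
  fN tau N a b = Cmult c (fN tau N a' b').
Proof.
  intros Ht Hrel. rewrite !fN_square_limit.
  destruct (sq_converges (rate tau) (rate_pos tau Ht) _ (hecke_decays tau N a' b' Ht)) as [l Hl].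
  rewrite (Clim_Ccv _ _ Hl). apply Clim_Ccv, (Ccv_transfer _ _ _ _ Hl Hrel).
Qed.

Lemma weighted_split tau N a b v w1 w2 r s : v r s = w1 r s + w2 r s ->
  weighted tau N a b v r s = Cplus (weighted tau N a b w1 r s) (weighted tau N a b w2 r s).
Proof. intros E. unfold weighted. rewrite E, RtoC_plus. ring. Qed.

Lemma fN_swap tau N a b a' b' : a' = b -> b' = a -> fN tau N a b = fN tau N a' b'.
Proof.
  intros -> ->. rewrite !fN_square_limit. apply Clim_ext. intros M.
  rewrite <- sq_swap. apply sq_ext. intros r s. unfold weighted, hterm.
  replace (hecke_weight s r) with (hecke_weight r s)
    by (unfold hecke_weight; destruct (Z.leb_spec 0 r), (Z.leb_spec 0 s), (Z.ltb_spec r 0),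
          (Z.ltb_spec s 0); simpl; lra || lia).
  rewrite (Z.add_comm s r). replace (qexp N a b s r) with (qexp N b a r s) by (unfold qexp; field).
  reflexivity.
Qed.

(* Under (r, s) |-> (s + 1, r - 1) the two quadrants are exchanged up to the lines
   r = 0 and s = -1. *)
Lemma hecke_weight_shift r s :
  hecke_weight (s + 1) (r - 1) = hecke_weight r s + (line_sm1 r s - line_r0 r s).
Proof.
  unfold hecke_weight, line_r0, line_sm1.
  destruct (Z.leb_spec 0 (s+1)), (Z.leb_spec 0 (r-1)), (Z.ltb_spec (s+1) 0), (Z.ltb_spec (r-1) 0),
    (Z.leb_spec 0 r), (Z.leb_spec 0 s), (Z.ltb_spec r 0), (Z.ltb_spec s 0),
    (Z.eqb_spec r 0), (Z.eqb_spec s (-1)); simpl; try lia; lra.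
Qed.

Lemma fN_shift tau N a b a' b' k1 k2 : 0 < snd tau -> a - INR N = IZR k1 -> b = IZR k2 ->
  a' = INR N + b -> b' = a - INR N ->
  fN tau N a b = Cmult (qpow tau (a - b - INR N)) (fN tau N a' b').
Proof.
  intros Ht Hk1 Hk2 -> ->. apply fN_relation; [exact Ht|].
  set (a' := INR N + b). set (b' := a - INR N).
  set (E := weighted tau N a' b' (fun r s => line_sm1 r s - line_r0 r s)).
  apply (square_relation (rate tau) _ (weighted tau N a' b' (fun r s => hecke_weight (s + 1) (r - 1)))
          _ E _ 1 (-1)); [apply rate_pos, Ht|apply hecke_decays, Ht| | | |].
  - apply (decays_ext _ (fun r s => Cplus (weighted tau N a' b' line_sm1 r s)
                          (Cmult (RtoC (-1)) (weighted tau N a' b' line_r0 r s)))).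
    + intros r s. unfold E, weighted. rewrite RtoC_minus. ring.
    + apply decays_plus; [|apply decays_scal]; [apply line_sm1_decays | apply line_r0_decays]; exact Ht.
  - intros M. rewrite <- sq_scal, <- sq_swap. apply sq_ext. intros r s.
    unfold weighted, hterm.
    replace (s + -1 + 1)%Z with s by lia. replace (r + 1 - 1)%Z with r by lia.
    replace (r + 1 + (s + -1))%Z with (s + r)%Z by lia.
    replace (qexp N a b s r) with ((a - b - INR N) + qexp N a' b' (r + 1) (s + -1))
      by (unfold qexp, a', b'; izr; field).
    rewrite qpow_add. ring.
  - intros r s. apply weighted_split, hecke_weight_shift.
  - apply (Ccv0_ext (fun M => Cminus (sq M (weighted tau N a' b' line_sm1))
                                   (sq M (weighted tau N a' b' line_r0)))).
    + intros M. rewrite <- sq_minus. apply sq_ext. intros r s. unfold E, weighted.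
      rewrite RtoC_minus. ring.
    + apply Ccv0_minus; [apply (line_sm1_vanishes _ _ _ _ k2) | apply (line_r0_vanishes _ _ _ _ k1)];
        try exact Ht; unfold a', b'; lra.
Qed.

(* Under (r, s) |-> (-r, -s-1) the two quadrants are exchanged up to the line r = 0. *)
Lemma hecke_weight_reflect r s : - hecke_weight (- r) (- s - 1) = hecke_weight r s + - line_r0 r s.
Proof.
  unfold hecke_weight, line_r0.
  destruct (Z.leb_spec 0 (-r)), (Z.leb_spec 0 (-s-1)), (Z.ltb_spec (-r) 0), (Z.ltb_spec (-s-1) 0),
    (Z.leb_spec 0 r), (Z.leb_spec 0 s), (Z.ltb_spec r 0), (Z.ltb_spec s 0),
    (Z.eqb_spec r 0); simpl; try lia; lra.
Qed.

Lemma fN_reflect tau N a b a' b' k : 0 < snd tau -> b = IZR k ->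
  a' = INR N + 2 - a -> b' = 2 - b ->
  fN tau N a b = Cmult (qpow tau (1 - b)) (fN tau N a' b').
Proof.
  intros Ht Hk -> ->. apply fN_relation; [exact Ht|].
  set (a' := INR N + 2 - a). set (b' := 2 - b).
  set (E := weighted tau N a' b' (fun r s => - line_r0 r s)).
  apply (square_relation (rate tau) _ (weighted tau N a' b' (fun r s => - hecke_weight (- r) (- s - 1)))
          _ E _ 1 0); [apply rate_pos, Ht|apply hecke_decays, Ht| | | |].
  - apply (decays_ext _ (fun r s => Cmult (RtoC (-1)) (weighted tau N a' b' line_r0 r s))).
    + intros r s. unfold E, weighted. rewrite RtoC_opp. ring.
    + apply decays_scal, line_r0_decays, Ht.
  - intros M. rewrite <- sq_scal.
    transitivity (sq M (fun r s => Cmult (qpow tau (1 - b))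
      (weighted tau N a' b' (fun r s => - hecke_weight (- r) (- s - 1)) (0 - r)%Z (-1 - s)%Z))).
    + apply sq_ext. intros r s. unfold weighted, hterm.
      replace (- (0 - r))%Z with r by lia. replace (- (-1 - s) - 1)%Z with s by lia.
      rewrite (sg_odd_sum (0 - r + (-1 - s)) (r + s)).
      2:{ replace (0 - r + (-1 - s) + (r + s))%Z with (2 * (-1) + 1)%Z by ring. apply Z.even_odd. }
      replace (qexp N a b r s) with ((1 - b) + qexp N a' b' (0 - r) (-1 - s))
        by (unfold qexp, a', b'; izr; field).
      rewrite qpow_add, RtoC_opp. ring.
    + rewrite (sq_reflect_r M 0 (fun r s => Cmult _ (weighted tau N a' b' _ r (-1 - s)%Z))).
      rewrite (sq_reflect_s M (-1) (fun r s => Cmult _ (weighted tau N a' b' _ (r + (0 + 1))%Z s))).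
      apply sq_ext. intros r s. do 3 f_equal; lia.
  - intros r s. apply weighted_split, hecke_weight_reflect.
  - apply (Ccv0_ext (fun M => Cmult (RtoC (-1)) (sq M (weighted tau N a' b' line_r0)))).
    + intros M. rewrite <- sq_scal. apply sq_ext. intros r s. unfold E, weighted.
      rewrite RtoC_opp. ring.
    + apply Ccv0_scal, (line_r0_vanishes _ _ _ _ (2 - k)); [exact Ht|].
      unfold b'. rewrite Hk, minus_IZR. reflexivity.
Qed.

Lemma S_fun_relation N m l m' l' tau d :
  - / 8 + (IZR l' + 1) ^ 2 / (4 * (INR N + 2)) - IZR m' ^ 2 / (4 * INR N)
  = - / 8 + (IZR l + 1) ^ 2 / (4 * (INR N + 2)) - IZR m ^ 2 / (4 * INR N) + d ->
  fN tau N (1 + (IZR m + IZR l) / 2) (1 - (IZR m - IZR l) / 2)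
  = Cmult (qpow tau d) (fN tau N (1 + (IZR m' + IZR l') / 2) (1 - (IZR m' - IZR l') / 2)) ->
  S_fun N m l tau = S_fun N m' l' tau.
Proof.
  intros He Hf. unfold S_fun. fold (fN tau N (1 + (IZR m + IZR l) / 2) (1 - (IZR m - IZR l) / 2)).
  fold (fN tau N (1 + (IZR m' + IZR l') / 2) (1 - (IZR m' - IZR l') / 2)).
  rewrite He, Hf, qpow_add. unfold Cdiv. ring.
Qed.

Theorem mainTheorem5 (N : nat) (m l : Z) (tau : C) :
  (0 < N)%nat -> Z.Even (m - l) -> 0 < snd tau ->
  S_fun N m l tau = S_fun N (- m) l tau /\
  S_fun N m l tau = S_fun N (2 * Z.of_nat N - m) l tau /\
  S_fun N m l tau = S_fun N (Z.of_nat N - m) (Z.of_nat N - l) tau.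
Proof.
  intros HN [j Hj] Ht.
  assert (HNr : 0 < INR N) by (apply lt_0_INR, HN).
  assert (Em : IZR m = IZR l + 2 * IZR j) by (replace m with (l + 2 * j)%Z by lia; izr; ring).
  split; [|split].
  - apply (S_fun_relation _ _ _ _ _ _ 0); [rewrite opp_IZR; field; lra|].
    rewrite qpow_0, Cmult_1_l. apply fN_swap; rewrite opp_IZR; field.
  - apply (S_fun_relation _ _ _ _ _ _ (IZR m - INR N)).
    + izr. rewrite <- INR_IZR_INZ. field. lra.
    + replace (IZR m - INR N)
        with (1 + (IZR m + IZR l) / 2 - (1 - (IZR m - IZR l) / 2) - INR N) by field.
      apply (fN_shift _ _ _ _ _ _ (1 + l + j - Z.of_nat N) (1 - j) Ht);
        izr; rewrite <- ?INR_IZR_INZ, ?Em; field.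
  - apply (S_fun_relation _ _ _ _ _ _ (1 - (1 - (IZR m - IZR l) / 2))).
    + izr. rewrite <- INR_IZR_INZ. field. lra.
    + apply (fN_reflect _ _ _ _ _ _ (1 - j) Ht); izr; rewrite <- ?INR_IZR_INZ, ?Em; field.
Qed.
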